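(* Let $\vec G$ be a directed graph whose underlying graph $G$ is bipartite (and simple), and let $M$ be a set of edges of $\vec G$ such that for every vertex $v$ of $\vec G$ there is at least one edge of $M$ directed into $v$. If $\vec G$ admits an $M$-complete $\{P_5,T_5\}$-decomposition, then $\vec G$ (and hence $G$) admits a decomposition into paths of length $5$.
   Context: A directed graph is a graph together with an orientation of its edges; edges are ordered pairs $(a,b)$ written $ab$ (directed from $a$ to $b$). Trails and paths in a directed graph are trails and paths of the underlying undirected graph (orientations ignored). $P_5$ is the path of length $5$ (five edges). $T_5$ is the unique bipartite trail of length $5$ that is not a path, i.e. a trail $v_0v_1v_2v_3v_4v_5$ with all of $v_0,\dots,v_4$ distinct and $v_5=v_1$. A $\{P_5,T_5\}$-decomposition of $\vec G$ is a partition of its edge set into edge sets of subgraphs each of which is a copy of $P_5$ or of $T_5$. Given such a decomposition $\mathcal D$, an edge $ab$ is inward in $\mathcal D$ if, for the element $T\in\mathcal D$ containing $ab$, $d_T(a)=1$. $\mathcal D$ is $M$-complete if every edge of $M$ is inward in $\mathcal D$. *)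

From mathcomp Require Import all_boot.
Set Implicit Arguments. Unset Strict Implicit. Unset Printing Implicit Defensive.

(* A directed graph on a finite vertex type V is a relation D : rel V;
   D a b means the (directed) edge ab, from a to b, is present. *)

(* Underlying graph is simple: no loops, and no pair of opposite arcs
   (which would give parallel edges in the underlying graph). *)
Definition simple_digraph (V : finType) (D : rel V) : Prop :=
  (forall a, ~~ D a a) /\ (forall a b, D a b -> ~~ D b a).

Definition bipartite_digraph (V : finType) (D : rel V) : Prop :=
  exists c : V -> bool, forall a b, D a b -> c a != c b.

(* A trail of length 5 is given by its vertex sequence v_0 ... v_5. *)
Definition walk5 (V : finType) := {ffun 'I_6 -> V}.
Definition wv (V : finType) (w : walk5 V) (i : nat) : V := w (inord i).

Definition edges_in (V : finType) (D : rel V) (w : walk5 V) : Prop :=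
  forall i, i < 5 -> D (wv w i) (wv w i.+1) || D (wv w i.+1) (wv w i).

Definition isP5 (V : finType) (D : rel V) (w : walk5 V) : Prop :=
  edges_in D w /\ (forall i j, i < 6 -> j < 6 -> wv w i = wv w j -> i = j).

Definition isT5 (V : finType) (D : rel V) (w : walk5 V) : Prop :=
  edges_in D w /\ (forall i j, i < 5 -> j < 5 -> wv w i = wv w j -> i = j)
  /\ wv w 5 = wv w 1.

Definition step_is (V : finType) (w : walk5 V) (i : nat) (a b : V) : bool :=
  ((wv w i == a) && (wv w i.+1 == b)) || ((wv w i == b) && (wv w i.+1 == a)).

Definition uses (V : finType) (w : walk5 V) (a b : V) : nat :=
  count (fun i => step_is w i a b) (iota 0 5).

Definition deg_in (V : finType) (w : walk5 V) (x : V) : nat :=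
  count (fun i => (wv w i == x) || (wv w i.+1 == x)) (iota 0 5).

Definition partitions (V : finType) (D : rel V) (F : seq (walk5 V)) : Prop :=
  forall a b, D a b -> sumn (map (fun w => uses w a b) F) = 1.

Definition PT_decomposition (V : finType) (D : rel V) (F : seq (walk5 V)) : Prop :=
  (forall w, w \in F -> isP5 D w \/ isT5 D w) /\ partitions D F.

Definition P5_decomposition (V : finType) (D : rel V) (F : seq (walk5 V)) : Prop :=
  (forall w, w \in F -> isP5 D w) /\ partitions D F.

(* edge ab is inward: in the element T containing ab, d_T(a) = 1 *)
Definition M_complete (V : finType) (D M : rel V) (F : seq (walk5 V)) : Prop :=
  forall a b, M a b -> forall w, w \in F -> 0 < uses w a b -> deg_in w a = 1.

From mathcomp Require Import all_boot zify.

(* Induct on the number of copies of T_5.  Let X = x0 v p s q v be one of them and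
   up an edge of M; by M-completeness u is an end of the element W = u p y2 y3 y4 y5
   containing up.  Replacing X and W by the path u p s q v x0 and the walk
   v p y2 y3 y4 y5 keeps the decomposition M-complete and destroys the T_5 X, unless
   y4 = v (bipartiteness rules out every other coincidence of vertices).  In that
   case the second walk is the T_5 y5 v y3 y2 p v and we start again at y3.  The
   vertices p, y3, ... met around v are distinct, each coming with its own P_5 of
   the original decomposition having v as its vertex 4, so this stops. *)

Set Implicit Arguments. Unset Strict Implicit. Unset Printing Implicit Defensive.

Arguments wv : simpl never.

Section Walks.
Variable V : finType.
Implicit Types (w : walk5 V) (a b x y : V).

Definition mk6 (a0 a1 a2 a3 a4 a5 : V) : walk5 V :=
  [ffun i : 'I_6 => nth a0 [:: a0; a1; a2; a3; a4; a5] i].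

Lemma wv_mk6 a0 a1 a2 a3 a4 a5 i : i < 6 ->
  wv (mk6 a0 a1 a2 a3 a4 a5) i = nth a0 [:: a0; a1; a2; a3; a4; a5] i.
Proof. by move=> lt_i6; rewrite /wv ffunE inordK. Qed.

Lemma wvE a0 a1 a2 a3 a4 a5 :
  (wv (mk6 a0 a1 a2 a3 a4 a5) 0 = a0) * (wv (mk6 a0 a1 a2 a3 a4 a5) 1 = a1)
  * (wv (mk6 a0 a1 a2 a3 a4 a5) 2 = a2) * (wv (mk6 a0 a1 a2 a3 a4 a5) 3 = a3)
  * (wv (mk6 a0 a1 a2 a3 a4 a5) 4 = a4) * (wv (mk6 a0 a1 a2 a3 a4 a5) 5 = a5).
Proof. by rewrite !wv_mk6. Qed.

Lemma mk6_wv w : w = mk6 (wv w 0) (wv w 1) (wv w 2) (wv w 3) (wv w 4) (wv w 5).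
Proof.
apply/ffunP => i; rewrite ffunE.
have -> : i = inord i by apply/val_inj; rewrite /= inordK.
by rewrite inordK //; case: (nat_of_ord i) (ltn_ord i) => [|[|[|[|[|[|]]]]]].
Qed.

Definition rev5 w := mk6 (wv w 5) (wv w 4) (wv w 3) (wv w 2) (wv w 1) (wv w 0).

Definition joins x y a b : bool := ((x == a) && (y == b)) || ((x == b) && (y == a)).

Lemma joinsC x y a b : joins x y a b = joins y x a b.
Proof. by rewrite /joins; case: (x == a) (x == b) (y == a) (y == b) => [] [] [] []. Qed.

Lemma joins_sym x y a b : joins x y a b = joins x y b a.
Proof. by rewrite /joins orbC. Qed.

Lemma usesE w a b : uses w a b =
  joins (wv w 0) (wv w 1) a b + joins (wv w 1) (wv w 2) a b
  + joins (wv w 2) (wv w 3) a b + joins (wv w 3) (wv w 4) a b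
  + joins (wv w 4) (wv w 5) a b.
Proof. by rewrite /uses /step_is /joins /= addn0 !addnA. Qed.

Lemma degE w x : deg_in w x =
  ((wv w 0 == x) || (wv w 1 == x)) + ((wv w 1 == x) || (wv w 2 == x))
  + ((wv w 2 == x) || (wv w 3 == x)) + ((wv w 3 == x) || (wv w 4 == x))
  + ((wv w 4 == x) || (wv w 5 == x)).
Proof. by rewrite /deg_in /= addn0 !addnA. Qed.

Lemma usesC w a b : uses w a b = uses w b a.
Proof. by rewrite !usesE !(joins_sym _ _ a b). Qed.

Lemma uses_rev5 w a b : uses (rev5 w) a b = uses w a b.
Proof.
rewrite !usesE !wvE (joinsC (wv w 5) (wv w 4)) (joinsC (wv w 4) (wv w 3)).
rewrite (joinsC (wv w 3) (wv w 2)) (joinsC (wv w 2) (wv w 1)).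
by rewrite (joinsC (wv w 1) (wv w 0)); lia.
Qed.

Lemma uses_gt0P w a b : 0 < uses w a b -> exists2 i, i < 5 & step_is w i a b.
Proof.
rewrite /uses -has_count => /hasP [i]; rewrite mem_iota => /andP [_ lt_i5].
by exists i.
Qed.

Lemma uses_step w i : i < 5 -> 0 < uses w (wv w i) (wv w i.+1).
Proof.
move=> lt_i5; rewrite /uses -has_count; apply/hasP; exists i.
  by rewrite mem_iota.
by rewrite /step_is !eqxx.
Qed.

Section StepsOfMk6.
Variables a0 a1 a2 a3 a4 a5 : V.
Let w := mk6 a0 a1 a2 a3 a4 a5.
Lemma uses_mk6_01 : 0 < uses w a0 a1.
Proof. by have := @uses_step w 0; rewrite !wvE; apply. Qed.
Lemma uses_mk6_12 : 0 < uses w a1 a2.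
Proof. by have := @uses_step w 1; rewrite !wvE; apply. Qed.
Lemma uses_mk6_23 : 0 < uses w a2 a3.
Proof. by have := @uses_step w 2; rewrite !wvE; apply. Qed.
Lemma uses_mk6_34 : 0 < uses w a3 a4.
Proof. by have := @uses_step w 3; rewrite !wvE; apply. Qed.
Lemma uses_mk6_45 : 0 < uses w a4 a5.
Proof. by have := @uses_step w 4; rewrite !wvE; apply. Qed.
End StepsOfMk6.

Variable D : rel V.
Local Notation adj a b := (D a b || D b a).
Local Notation PT w := (isP5 D w \/ isT5 D w).

Lemma P5_eq w i j : isP5 D w -> i < 6 -> j < 6 -> (wv w i == wv w j) = (i == j).
Proof. by case=> _ inj_w lt_i lt_j; apply/eqP/eqP => [/inj_w|->]; auto. Qed.

Definition fold5 (i : nat) := if i == 5 then 1 else i.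

Lemma T5_eq w i j : isT5 D w -> i < 6 -> j < 6 ->
  (wv w i == wv w j) = (fold5 i == fold5 j).
Proof.
case=> _ [inj_w w51] lt_i lt_j.
have fold5P k : k < 6 -> wv w k = wv w (fold5 k) /\ fold5 k < 5.
  by rewrite /fold5; case: eqP => [->|ne_k5] lt_k; split => //; lia.
have [-> lt_i'] := fold5P i lt_i; have [-> lt_j'] := fold5P j lt_j.
by apply/eqP/eqP => [/inj_w|->]; auto.
Qed.

Lemma P5_not_T5 w : isP5 D w -> wv w 5 != wv w 1.
Proof. by move=> Pw; rewrite (P5_eq Pw). Qed.

Lemma uniq_P5 w : isP5 D w ->
  uniq [:: wv w 0; wv w 1; wv w 2; wv w 3; wv w 4; wv w 5].
Proof. by move=> Pw; rewrite /= !inE !(P5_eq Pw). Qed.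

Lemma uniq_T5 w : isT5 D w -> uniq [:: wv w 0; wv w 1; wv w 2; wv w 3; wv w 4].
Proof. by move=> Tw; rewrite /= !inE !(T5_eq Tw). Qed.

Lemma isP5_mk6 a0 a1 a2 a3 a4 a5 : uniq [:: a0; a1; a2; a3; a4; a5] ->
  adj a0 a1 -> adj a1 a2 -> adj a2 a3 -> adj a3 a4 -> adj a4 a5 ->
  isP5 D (mk6 a0 a1 a2 a3 a4 a5).
Proof.
move=> U e01 e12 e23 e34 e45; split.
  by move=> [|[|[|[|[|i]]]]] //= _; rewrite !wvE.
by move=> i j lt_i lt_j; rewrite !wv_mk6 // => /eqP; rewrite nth_uniq // => /eqP.
Qed.

Lemma isT5_mk6 a0 a1 a2 a3 a4 : uniq [:: a0; a1; a2; a3; a4] ->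
  adj a0 a1 -> adj a1 a2 -> adj a2 a3 -> adj a3 a4 -> adj a4 a1 ->
  isT5 D (mk6 a0 a1 a2 a3 a4 a1).
Proof.
move=> U e01 e12 e23 e34 e41; split; [|split; last by rewrite !wvE].
  by move=> [|[|[|[|[|i]]]]] //= _; rewrite !wvE // orbC.
have wv5 k : k < 5 -> wv (mk6 a0 a1 a2 a3 a4 a1) k = nth a0 [:: a0; a1; a2; a3; a4] k.
  by case: k => [|[|[|[|[|k]]]]] //= _; rewrite !wvE.
by move=> i j lt_i lt_j; rewrite !wv5 // => /eqP; rewrite nth_uniq // => /eqP.
Qed.

Lemma P5_rev5 w : isP5 D w -> isP5 D (rev5 w).
Proof.
move=> Pw; have [adj_w _] := Pw.
apply: isP5_mk6; first by have := uniq_P5 Pw; rewrite -rev_uniq.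
all: by rewrite orbC; apply: adj_w.
Qed.

Lemma PT_T5 w : PT w -> wv w 5 = wv w 1 -> isT5 D w.
Proof. by case=> // Pw w51; move: (P5_not_T5 Pw); rewrite w51 eqxx. Qed.

Lemma PT_P5 w : PT w -> wv w 5 != wv w 1 -> isP5 D w.
Proof. by case=> // - [_ [_ ->]]; rewrite eqxx. Qed.

Lemma adj_mk6 a0 a1 a2 a3 a4 a5 : PT (mk6 a0 a1 a2 a3 a4 a5) ->
  [/\ adj a0 a1, adj a1 a2, adj a2 a3, adj a3 a4 & adj a4 a5].
Proof.
move=> PTw; have adj_w : edges_in D (mk6 a0 a1 a2 a3 a4 a5) by case: PTw => -[].
by split; [move: (adj_w 0)|move: (adj_w 1)|move: (adj_w 2)|move: (adj_w 3)|move: (adj_w 4)];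
   rewrite !wvE; apply.
Qed.

Lemma uses_adj w a b : PT w -> 0 < uses w a b -> adj a b.
Proof.
move=> PTw /uses_gt0P [i lt_i]; have adj_w : edges_in D w by case: PTw => -[].
by case/orP => /andP [/eqP <- /eqP <-]; [|rewrite orbC]; apply: adj_w.
Qed.

Lemma P5_deg1 w a b : isP5 D w -> deg_in w a = 1 -> 0 < uses w a b ->
  (a = wv w 0 /\ b = wv w 1) \/ (a = wv w 5 /\ b = wv w 4).
Proof.
move=> Pw deg_a /uses_gt0P [i lt_i].
by case/orP => /andP [/eqP Ea /eqP Eb]; subst a b;
  case: i lt_i deg_a => [|[|[|[|[|i]]]]] //= _; rewrite degE !(P5_eq Pw) //=; auto.
Qed.

Lemma T5_deg1 w a b : isT5 D w -> deg_in w a = 1 -> 0 < uses w a b ->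
  a = wv w 0 /\ b = wv w 1.
Proof.
move=> Tw deg_a /uses_gt0P [i lt_i].
by case/orP => /andP [/eqP Ea /eqP Eb]; subst a b;
  case: i lt_i deg_a => [|[|[|[|[|i]]]]] //= _; rewrite degE !(T5_eq Tw) //=; auto.
Qed.

Lemma P5_deg_0 w : isP5 D w -> deg_in w (wv w 0) = 1.
Proof. by move=> Pw; rewrite degE !(P5_eq Pw). Qed.

Lemma P5_deg_5 w : isP5 D w -> deg_in w (wv w 5) = 1.
Proof. by move=> Pw; rewrite degE !(P5_eq Pw). Qed.

Lemma T5_deg_0 w : isT5 D w -> deg_in w (wv w 0) = 1.
Proof. by move=> Tw; rewrite degE !(T5_eq Tw). Qed.

End Walks.

Section Decompositions.
Variables (V : finType) (D : rel V).
Implicit Types (w X W P Y : walk5 V) (a b : V) (F : seq (walk5 V)).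
Local Notation adj a b := (D a b || D b a).
Local Notation PT w := (isP5 D w \/ isT5 D w).

Definition usesF F a b := sumn (map (fun w => uses w a b) F).

Lemma usesF_perm F1 F2 a b : perm_eq F1 F2 -> usesF F1 a b = usesF F2 a b.
Proof. by move=> eqF; apply/perm_sumn/perm_map. Qed.

Lemma usesF_gt0 F a b : 0 < usesF F a b -> exists2 w, w \in F & 0 < uses w a b.
Proof.
elim: F => [|w F IHF] //; rewrite /usesF /= addn_gt0 => /orP [uw|/IHF [w' Fw' uw']].
  by exists w; rewrite ?mem_head.
by exists w'; rewrite // inE Fw' orbT.
Qed.

Lemma partitions_usesF F a b : partitions D F -> adj a b -> usesF F a b = 1.
Proof.
move=> partF /orP [Dab|Dba]; first exact: partF.
by rewrite /usesF; under eq_map => w do rewrite usesC; apply: partF.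
Qed.

Lemma perm_pair F X W : X \in F -> W \in F -> X != W ->
  perm_eq F (X :: W :: rem W (rem X F)).
Proof.
move=> FX FW neXW; apply: perm_trans (perm_to_rem FX) _; rewrite perm_cons.
by apply/perm_to_rem/rem_mem; rewrite // eq_sym.
Qed.

Lemma partitions_uses_pair F X W a b : partitions D F -> X \in F -> W \in F ->
  X != W -> adj a b -> uses X a b + uses W a b <= 1.
Proof.
move=> partF FX FW neXW adj_ab; have := partitions_usesF partF adj_ab.
by rewrite (usesF_perm _ _ (perm_pair FX FW neXW)) /usesF /=; lia.
Qed.

Lemma partitions_uses_uniq F w1 w2 a b : partitions D F -> w1 \in F -> w2 \in F ->
  adj a b -> 0 < uses w1 a b -> 0 < uses w2 a b -> w1 = w2.
Proof.
move=> partF Fw1 Fw2 adj_ab u1 u2; apply/eqP/negPn/negP => ne12.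
by have := partitions_uses_pair partF Fw1 Fw2 ne12 adj_ab; lia.
Qed.

Definition T5b w := wv w 5 == wv w 1.
Definition nT5 F := count T5b F.

Lemma P5_decomposition_nT5 F : PT_decomposition D F -> nT5 F = 0 ->
  P5_decomposition D F.
Proof.
move=> [PTF partF] /eqP; rewrite -leqn0 leqNgt -has_count => /hasPn noT5; split=> // w Fw.
exact: PT_P5 (PTF w Fw) (noT5 w Fw).
Qed.

Section Exchange.
Variable M : rel V.
Hypothesis MD : forall a b, M a b -> D a b.

Definition complete_decomposition F := PT_decomposition D F /\ M_complete D M F.

Variables (F : seq (walk5 V)) (X W P Y : walk5 V).
Hypotheses (FX : X \in F) (FW : W \in F) (neXW : X != W).
Local Notation F' := (P :: Y :: rem W (rem X F)).

Lemma mem_exchange w : w \in F' -> [\/ w = P, w = Y | w \in F].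
Proof.
rewrite !inE => /or3P [/eqP|/eqP|/mem_rem/mem_rem];
  by [constructor 1|constructor 2|constructor 3].
Qed.

Lemma nT5_exchange : nT5 F' + T5b X + T5b W = nT5 F + T5b P + T5b Y.
Proof.
rewrite /nT5 (permP (perm_pair FX FW neXW)) /=.
by move: (T5b P : nat) (T5b Y : nat) (T5b X : nat) (T5b W : nat) (count _ _) => *; lia.
Qed.

Lemma complete_exchange : complete_decomposition F -> PT P -> PT Y ->
  (forall a b, uses P a b + uses Y a b = uses X a b + uses W a b) ->
  (forall a b, M a b -> 0 < uses X a b + uses W a b ->
     (deg_in P a = 1 /\ 0 < uses P a b) \/ (deg_in Y a = 1 /\ 0 < uses Y a b)) ->
  complete_decomposition F'.
Proof.
move=> [[PTF partF] completeF] PTP PTY usesPY inwardPY; split; first split.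
- by move=> w /mem_exchange [->|->|/PTF].
- move=> a b Dab; have := partF a b Dab.
  rewrite -/(usesF F a b) (usesF_perm _ _ (perm_pair FX FW neXW)) /usesF /=.
  by have := usesPY a b; lia.
have le1 a b : M a b -> uses P a b + uses Y a b <= 1.
  by move=> Mab; rewrite usesPY (partitions_uses_pair partF) // MD.
move=> a b Mab w /mem_exchange [->|->|/completeF]; last exact.
- move=> uP; have := le1 a b Mab; have := inwardPY a b Mab; rewrite -usesPY.
  by case=> [|[//]|[]]; lia.
- move=> uY; have := le1 a b Mab; have := inwardPY a b Mab; rewrite -usesPY.
  by case=> [|[]|[//]]; lia.
Qed.

End Exchange.
End Decompositions.

Ltac uniq_hyps H :=
  move: H; rewrite /= !inE !negb_or => H;
  repeat match goal with K : is_true (_ && _) |- _ => case/andP: K => ? ? end.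
Ltac solve_uniq :=
  rewrite /= !inE !negb_or; repeat (apply/andP; split); by [|rewrite eq_sym].

Section Bipartite.
Variables (V : finType) (D : rel V) (c : V -> bool).
Hypothesis Hc : forall a b, D a b -> c a != c b.
Local Notation adj a b := (D a b || D b a).

Lemma adj_colour a b : adj a b -> c b = ~~ c a.
Proof. by case/orP => /Hc; case: (c a); case: (c b). Qed.

Lemma colour_neq a b : c a != c b -> a != b.
Proof. by apply: contraNneq => ->. Qed.

Lemma adj_neq a b : adj a b -> a != b.
Proof. by move=> /adj_colour e; apply: colour_neq; rewrite e; case: (c a). Qed.

Lemma odd_walk3_neq a0 a1 a2 a3 : adj a0 a1 -> adj a1 a2 -> adj a2 a3 -> a0 != a3.
Proof.
move=> /adj_colour e1 /adj_colour e2 /adj_colour e3.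
by apply: colour_neq; rewrite e3 e2 e1; case: (c a0).
Qed.

Lemma odd_walk5_neq a0 a1 a2 a3 a4 a5 : adj a0 a1 -> adj a1 a2 -> adj a2 a3 ->
  adj a3 a4 -> adj a4 a5 -> a0 != a5.
Proof.
move=> /adj_colour e1 /adj_colour e2 /adj_colour e3 /adj_colour e4 /adj_colour e5.
by apply: colour_neq; rewrite e5 e4 e3 e2 e1; case: (c a0).
Qed.

End Bipartite.

Section ExchangeAtT5.
Variables (V : finType) (D M : rel V) (c : V -> bool).
Hypotheses (Hc : forall a b, D a b -> c a != c b) (MD : forall a b, M a b -> D a b).
Local Notation adj a b := (D a b || D b a).
Local Notation PT w := (isP5 D w \/ isT5 D w).

Variables (F : seq (walk5 V)) (x0 v p s q u y2 y3 y4 y5 : V) (W : walk5 V).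
Local Notation X := (mk6 x0 v p s q v).
Local Notation W' := (mk6 u p y2 y3 y4 y5).
Local Notation P := (mk6 u p s q v x0).
Hypotheses (HF : complete_decomposition D M F) (FX : X \in F)
  (FW : W \in F) (neXW : X != W)
  (PTW' : isP5 D W' \/ isT5 D W' /\ y5 = p)
  (usesW : forall a b, uses W a b = uses W' a b)
  (T5bW : T5b W = (y5 == p))
  (endsW : forall a b, deg_in W a = 1 -> 0 < uses W a b ->
     (a = u /\ b = p) \/ [/\ a = y5, b = y4 & y5 != p]).

Lemma exchange_X_T5 : isT5 D X.
Proof. by have [[PTF _] _] := HF; move/PT_T5: (PTF _ FX); apply; rewrite !wvE. Qed.

Lemma exchange_W'_PT : PT W'.
Proof. by case: PTW' => [|[]]; auto. Qed.

Lemma exchange_disjoint a b : 0 < uses X a b -> 0 < uses W' a b -> False.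
Proof.
have [[PTF partF] _] := HF; move=> uX; rewrite -usesW => uW; move/eqP: neXW; apply.
exact: partitions_uses_uniq partF FX FW (uses_adj (PTF _ FX) uX) uX uW.
Qed.

Lemma exchange_M_edges a b : M a b -> 0 < uses X a b + uses W a b ->
  [\/ a = x0 /\ b = v, a = u /\ b = p | [/\ a = y5, b = y4 & y5 != p]].
Proof.
have [_ completeF] := HF; move=> Mab; rewrite addn_gt0 => /orP [uX|uW].
  by constructor 1; have := T5_deg1 exchange_X_T5 (completeF _ _ Mab _ FX uX) uX; rewrite !wvE.
by case: (endsW (completeF _ _ Mab _ FW uW) uW); [constructor 2|constructor 3].
Qed.

Lemma exchange_P_P5 : isP5 D P.
Proof.
have UX := uniq_T5 exchange_X_T5; rewrite !wvE in UX; uniq_hyps UX.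
have [xv vp ps sq qv] := adj_mk6 (or_intror exchange_X_T5).
have [up _ _ _ _] := adj_mk6 exchange_W'_PT.
have u_s : u != s.
  apply/eqP => us; apply: (@exchange_disjoint p s); first exact: uses_mk6_23.
  by rewrite usesC -us; exact: uses_mk6_01.
have u_v : u != v.
  apply/eqP => uv; apply: (@exchange_disjoint v p); first exact: uses_mk6_12.
  by rewrite -uv; exact: uses_mk6_01.
have u_p : u != p := adj_neq Hc up.
have u_q : u != q := odd_walk3_neq Hc up ps sq.
have u_x0 : u != x0 by apply: (odd_walk3_neq Hc up (_ : adj p v)); rewrite orbC.
apply: isP5_mk6 => //; first by solve_uniq.
by rewrite orbC.
Qed.

Lemma exchange_v_neq_y2 : v != y2.
Proof.
apply/eqP => vy2; apply: (@exchange_disjoint v p); first exact: uses_mk6_12.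
by rewrite vy2 usesC; exact: uses_mk6_12.
Qed.

Lemma exchange_inward Y : (y5 != p -> deg_in Y y5 = 1 /\ 0 < uses Y y5 y4) ->
  forall a b, M a b -> 0 < uses X a b + uses W a b ->
  (deg_in P a = 1 /\ 0 < uses P a b) \/ (deg_in Y a = 1 /\ 0 < uses Y a b).
Proof.
move=> endY a b Mab /(exchange_M_edges Mab) [[-> ->]|[-> ->]|[-> -> /endY]];
  [left|left|by right].
  by rewrite usesC uses_mk6_45; have := P5_deg_5 exchange_P_P5; rewrite !wvE.
by rewrite uses_mk6_01; have := P5_deg_0 exchange_P_P5; rewrite !wvE.
Qed.

Lemma exchange_drops_T5 : y4 != v ->
  exists F', complete_decomposition D M F' /\ nT5 F' < nT5 F.
Proof.
move=> y4_v; have UX := uniq_T5 exchange_X_T5; rewrite !wvE in UX; uniq_hyps UX.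
have [xv vp ps sq qv] := adj_mk6 (or_intror exchange_X_T5).
have [up py2 y23 y34 y45] := adj_mk6 exchange_W'_PT.
have v_y2 := exchange_v_neq_y2.
have v_y3 : v != y3 := odd_walk3_neq Hc vp py2 y23.
set Y := mk6 v p y2 y3 y4 y5.
have PTY : PT Y.
  case: PTW' => [PW'|[TW' y5p]].
  - have UW := uniq_P5 PW'; rewrite !wvE in UW; uniq_hyps UW.
    have v_y5 : v != y5 := odd_walk5_neq Hc vp py2 y23 y34 y45.
    by left; apply: isP5_mk6 => //; solve_uniq.
  - have UW := uniq_T5 TW'; rewrite !wvE in UW; uniq_hyps UW.
    by right; rewrite /Y y5p; apply: isT5_mk6 => //; [solve_uniq|rewrite -y5p].
have usesPY a b : uses P a b + uses Y a b = uses X a b + uses W a b.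
  by rewrite usesW !usesE !wvE (joinsC v x0); clear; lia.
exists (P :: Y :: rem W (rem X F)); split.
  apply: complete_exchange => //; first by left; exact: exchange_P_P5.
  apply: exchange_inward => y5_p.
  have PY : isP5 D Y by apply: PT_P5; rewrite // !wvE.
  by rewrite usesC uses_mk6_45; have := P5_deg_5 PY; rewrite !wvE.
have x0_p : x0 != p by [].
have := nT5_exchange P Y FX FW neXW.
rewrite T5bW /T5b !wvE eqxx (negbTE x0_p).
by move: (y5 == p : nat) => b; clear; lia.
Qed.

Lemma exchange_rotates_y5_neq_p : y4 = v -> y5 != p.
Proof.
move=> y4v; apply/eqP => y5p; apply: (@exchange_disjoint v p); first exact: uses_mk6_12.
by rewrite y4v y5p; exact: uses_mk6_45.
Qed.

Lemma exchange_rotates_T5 : y4 = v ->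
  let F' := P :: mk6 y5 v y3 y2 p v :: rem W (rem X F) in
  complete_decomposition D M F' /\ nT5 F' = nT5 F.
Proof.
move=> y4v; have UX := uniq_T5 exchange_X_T5; rewrite !wvE in UX; uniq_hyps UX.
have [xv vp ps sq qv] := adj_mk6 (or_intror exchange_X_T5).
have [up py2 y23 y3v vy5] := adj_mk6 exchange_W'_PT; rewrite y4v in y3v vy5.
have y5_p := exchange_rotates_y5_neq_p y4v.
have PW' : isP5 D W' by case: PTW' => // -[_ /eqP]; rewrite (negbTE y5_p).
have UW := uniq_P5 PW'; rewrite !wvE y4v in UW; uniq_hyps UW.
set Y := mk6 y5 v y3 y2 p v.
have TY : isT5 D Y by apply: isT5_mk6; first solve_uniq; rewrite orbC.
have usesPY a b : uses P a b + uses Y a b = uses X a b + uses W a b.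
  rewrite usesW !usesE !wvE y4v (joinsC v x0) (joinsC y5 v) (joinsC v y3).
  by rewrite (joinsC y3 y2) (joinsC y2 p) (joinsC p v); clear; lia.
split.
  apply: complete_exchange => //; [by left; exact: exchange_P_P5|by right|].
  apply: exchange_inward => _.
  by rewrite y4v uses_mk6_01; have := T5_deg_0 TY; rewrite !wvE.
have x0_p : x0 != p by [].
have := nT5_exchange P Y FX FW neXW.
by rewrite /= T5bW /T5b !wvE !eqxx (negbTE x0_p) (negbTE y5_p); clear; lia.
Qed.

End ExchangeAtT5.

Section LinkChains.
Variables (V : finType) (D : rel V).
Local Notation PT w := (isP5 D w \/ isT5 D w).

(* W read from its end u, reversing it if it is a P_5 ending at u. *)
Lemma deg1_normal_form W u p : PT W -> deg_in W u = 1 -> 0 < uses W u p ->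
  exists y2 y3 y4 y5,
  [/\ isP5 D (mk6 u p y2 y3 y4 y5) \/ isT5 D (mk6 u p y2 y3 y4 y5) /\ y5 = p,
      forall a b, uses W a b = uses (mk6 u p y2 y3 y4 y5) a b,
      T5b W = (y5 == p),
      forall a b, deg_in W a = 1 -> 0 < uses W a b ->
        (a = u /\ b = p) \/ [/\ a = y5, b = y4 & y5 != p]
    & wv W 1 = p /\ wv W 4 = y4 \/ wv W 4 = p /\ wv W 1 = y4].
Proof.
case=> [PW|TW] deg_u uW.
  have W51 := P5_not_T5 PW; have W04 : wv W 0 != wv W 4 by rewrite (P5_eq PW).
  case: (P5_deg1 PW deg_u uW) => [[-> ->]|[-> ->]].
    exists (wv W 2), (wv W 3), (wv W 4), (wv W 5); rewrite -mk6_wv.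
    split; [by left|by []|by rewrite /T5b (negbTE W51)| |by left].
    by move=> a b deg_a ua; case: (P5_deg1 PW deg_a ua) => -[-> ->]; [left|right].
  exists (wv W 3), (wv W 2), (wv W 1), (wv W 0).
  split; [by left; exact: (P5_rev5 PW)|by move=> a b; rewrite -(uses_rev5 W)| | |by right].
    by rewrite /T5b (negbTE W51) (negbTE W04).
  by move=> a b deg_a ua; case: (P5_deg1 PW deg_a ua) => -[-> ->]; [right|left].
have [Eu Ep] := T5_deg1 TW deg_u uW; have [_ [_ W51]] := TW.
have EW : W = mk6 (wv W 0) (wv W 1) (wv W 2) (wv W 3) (wv W 4) (wv W 1).
  by rewrite {1}(mk6_wv W) W51.
exists (wv W 2), (wv W 3), (wv W 4), p; rewrite Eu Ep -EW.
split; [by right|by []|by rewrite /T5b W51 !eqxx| |by left].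
by move=> a b deg_a ua; left; exact: T5_deg1 TW deg_a ua.
Qed.

(* The P_5s playing the role of W in successive rotations around v. *)
Definition link (F : seq (walk5 V)) (v y y' : V) := exists2 w, w \in F &
  [/\ isP5 D w, wv w 1 = y /\ wv w 4 = v \/ wv w 4 = y /\ wv w 1 = v & 0 < uses w v y'].

Definition link_chain (F : seq (walk5 V)) (v : V) (s : seq V) :=
  forall i, i.+1 < size s -> link F v (nth v s i) (nth v s i.+1).

(* The T_5 Z owns the edge vz, which the P_5 of a link ending at z would also own. *)
Lemma link_chain_notin F v y0 ys Z z : PT_decomposition D F ->
  link_chain F v (y0 :: ys) -> Z \in F -> wv Z 5 = wv Z 1 -> 0 < uses Z v z ->
  z \notin ys.
Proof.
move=> [PTF partF] chain FZ Z51 uZ; apply/negP => ys_z.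
have := chain (index z ys); rewrite /= ltnS index_mem nth_index //.
case/(_ ys_z) => w Fw [Pw _ uw].
have Ew := partitions_uses_uniq partF Fw FZ (uses_adj (PTF _ FZ) uZ) uw uZ.
by move: (P5_not_T5 Pw); rewrite Ew Z51 eqxx.
Qed.

Lemma link_chain_uniq F v y0 ys Z : PT_decomposition D F ->
  link_chain F v (y0 :: ys) -> Z \in F -> wv Z 5 = wv Z 1 -> 0 < uses Z v y0 ->
  uniq (y0 :: ys).
Proof.
move=> HF chain FZ Z51 uZ; have [PTF partF] := HF.
have nth_neq i j : i < j -> j < size (y0 :: ys) ->
    nth v (y0 :: ys) i != nth v (y0 :: ys) j.
  elim: i j => [|i IHi] [|j] // lt_ij lt_j.
    apply/eqP => /= E; move: (link_chain_notin HF chain FZ Z51 uZ).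
    by rewrite E mem_nth.
  apply/negP => /eqP Eij; move/negP: (IHi j lt_ij (ltnW lt_j)); apply.
  have [w1 Fw1 [Pw1 ends1 uw1]] := chain i (ltn_trans lt_ij lt_j).
  have [w2 Fw2 [Pw2 ends2 uw2]] := chain j lt_j.
  rewrite Eij in uw1.
  have Ew := partitions_uses_uniq partF Fw1 Fw2 (uses_adj (PTF _ Fw2) uw2) uw1 uw2.
  subst w2; have w14 : wv w1 1 != wv w1 4 by rewrite (P5_eq Pw1).
  by case: ends1 ends2 w14 => -[<- <-] [] [<- E]; rewrite ?E ?eqxx.
apply/(uniqP v) => i j lt_i lt_j Eij.
case: (ltngtP i j) => // [lt_ij|lt_ji].
  by move: (nth_neq i j lt_ij lt_j); rewrite Eij eqxx.
by move: (nth_neq j i lt_ji lt_i); rewrite Eij eqxx.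
Qed.

Lemma link_chain_cons F F' v p y ys P Y : PT_decomposition D F' ->
  (forall w, w \in F' -> [\/ w = P, w = Y | w \in F]) ->
  Y \in F' -> wv Y 5 = wv Y 1 -> 0 < uses Y v p ->
  wv P 1 = p -> p != v -> p != y ->
  link F v p y -> link_chain F' v (y :: ys) -> link_chain F v [:: p, y & ys].
Proof.
move=> PTF' memF' F'Y Y51 uY P1 p_v p_y link_py chain' [|i] //= lt_i.
have p_ys : p \notin ys := link_chain_notin PTF' chain' F'Y Y51 uY.
have [w F'w [Pw ends uw]] := chain' i lt_i.
case: (memF' w F'w) => [Ew|Ew|Fw]; last by exists w.
  subst w; case: ends => [[Ey _]|[_ Ev]]; last by move: p_v; rewrite -P1 Ev eqxx.
  have : p \in y :: ys by rewrite -P1 Ey mem_nth // ltnW.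
  by rewrite inE (negbTE p_y) (negbTE p_ys).
by subst w; move: (P5_not_T5 Pw); rewrite Y51 eqxx.
Qed.

End LinkChains.

Section Reduction.
Variables (V : finType) (D M : rel V) (c : V -> bool).
Hypotheses (Hc : forall a b, D a b -> c a != c b) (MD : forall a b, M a b -> D a b).
Hypothesis M_in : forall v, exists u, M u v.

Definition reducible (F : seq (walk5 V)) :=
  exists F', complete_decomposition D M F' /\ nT5 F' < nT5 F.

Lemma reducible_or_link_chain k F x0 v p s q : complete_decomposition D M F ->
  mk6 x0 v p s q v \in F ->
  reducible F \/ exists2 ys, size ys = k & link_chain D F v (p :: ys).
Proof.
elim: k F x0 v p s q => [|k IHk] F x0 v p s q HF FX; first by right; exists [::].
have [[PTF partF] completeF] := HF; have XT := exchange_X_T5 HF FX.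
have [_ vp _ _ _] := adj_mk6 (or_intror XT); have v_p := adj_neq Hc vp.
have [u Mup] := M_in p.
have [W FW uW] : exists2 W, W \in F & 0 < uses W u p.
  by apply: usesF_gt0; rewrite /usesF (partF u p (MD Mup)).
have deg_u := completeF u p Mup W FW uW.
have neXW : mk6 x0 v p s q v != W.
  apply/eqP => EW; rewrite -EW in deg_u uW.
  by have [_] := T5_deg1 XT deg_u uW; rewrite !wvE => /eqP; rewrite eq_sym (negbTE v_p).
have [y2 [y3 [y4 [y5 [PTW' usesW T5bW endsW linkW]]]]] :=
  deg1_normal_form (PTF W FW) deg_u uW.
have [y4v|y4_v] := eqVneq y4 v; last first.
  by left; move: (exchange_drops_T5 Hc MD HF FX FW neXW PTW' usesW T5bW endsW y4_v).
have [HF' nT5F'] := exchange_rotates_T5 Hc MD HF FX FW neXW PTW' usesW T5bW endsW y4v.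
set F' := _ :: _ :: _ in HF' nT5F'.
have F'Y : mk6 y5 v y3 y2 p v \in F' by rewrite !inE eqxx orbT.
have [[F'' [HF'' lt_F'']]|[ys size_ys chain']] := IHk F' y5 v y3 y2 p HF' F'Y.
  by left; exists F''; rewrite -nT5F'.
right; exists (y3 :: ys); first by rewrite /= size_ys.
have p_y3 : p != y3.
  case: PTW' => [/uniq_P5|[/uniq_T5 + _]]; rewrite !wvE => U; uniq_hyps U; by [].
have PW : isP5 D W.
  move/PT_P5: (PTF W FW); apply; rewrite -/(T5b W) T5bW.
  exact: exchange_rotates_y5_neq_p HF FX FW neXW usesW y4v.
apply: (link_chain_cons HF'.1 (@mem_exchange _ F _ _ _ _) F'Y _ _ _ _ _ _ chain');
  rewrite ?wvE // 1?eq_sym //.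
- by rewrite usesC; exact: uses_mk6_45.
- exists W => //; split => //; first by rewrite -y4v.
  by rewrite -y4v usesW usesC; exact: uses_mk6_34.
Qed.

Lemma T5_reducible F : complete_decomposition D M F -> 0 < nT5 F -> reducible F.
Proof.
rewrite /nT5 -has_count => HF /hasP [X FX /eqP X51]; rewrite (mk6_wv X) X51 in FX.
have [//|[ys size_ys chain]] := reducible_or_link_chain #|V| HF FX.
have U : uniq (wv X 2 :: ys).
  by apply: (link_chain_uniq HF.1 chain FX); rewrite ?wvE //; exact: uses_mk6_12.
move/card_uniqP: U => card_ys; have := max_card (mem (wv X 2 :: ys)).
by rewrite card_ys /= size_ys ltnn.
Qed.

End Reduction.

Theorem mainTheorem6 (V : finType) (D M : rel V) :
  simple_digraph D ->
  bipartite_digraph D ->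
  (forall a b, M a b -> D a b) ->
  (forall v, exists u, M u v) ->
  (exists F, PT_decomposition D F /\ M_complete D M F) ->
  exists F, P5_decomposition D F.
Proof.
move=> _ [c Hc] MD M_in [F HF].
have [n] := ubnP (nT5 F); elim: n F HF => // n IHn F HF lt_F.
have [noT5|hasT5] := posnP (nT5 F).
  by exists F; apply: P5_decomposition_nT5 HF.1 noT5.
have [F' [HF' lt_F']] := T5_reducible Hc MD M_in HF hasT5.
by apply: IHn HF' _; apply: leq_trans lt_F' _.
Qed.
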